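(* Let $N\in\mathbb{N}$, $J\in\{0,\dots,N\}$, $m,M\in(0,1)$ with $m\le M$, and $a_1,\dots,a_N\in[m,M]$. Define $f\colon[m,M]^N\to\mathbb{R}^+$ by \[ f(z_1,\dots,z_N)=\prod_{i=1}^{J}\Big(N+\frac{a_i}{z_i}\Big)\prod_{i=J+1}^{N}\Big(N+\frac{1-a_i}{1-z_i}\Big). \] Then $f$ is convex. Moreover, any function obtained from $f$ by recursively substituting variables $z_i$ by affine functions of the remaining free variables (on a convex domain mapped into $[m,M]^N$) is convex. *)

From HB Require Import structures.
From mathcomp Require Import all_boot all_order all_algebra.
From mathcomp Require Import reals.
Set Implicit Arguments. Unset Strict Implicit. Unset Printing Implicit Defensive.
Import Order.TTheory GRing.Theory Num.Theory.
Local Open Scope ring_scope.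

Section Defs.
Variable R : realType.

(* f(z) = prod_{i=1}^J (N + a_i/z_i) * prod_{i=J+1}^N (N + (1-a_i)/(1-z_i));
   with 0-based ordinals, i < J covers the paper's indices 1..J. *)
Definition fJ (N J : nat) (a : 'I_N -> R) (z : 'I_N -> R) : R :=
  \prod_(i < N) (if (i < J)%N then N%:R + a i / z i
                 else N%:R + (1 - a i) / (1 - z i)).

Definition in_box (N : nat) (m M : R) (z : 'I_N -> R) : Prop :=
  forall i, m <= z i <= M.

Definition convex_set (k : nat) (D : ('I_k -> R) -> Prop) : Prop :=
  forall x y (t : R), D x -> D y -> 0 <= t <= 1 ->
    D (fun i => t * x i + (1 - t) * y i).

Definition convex_on (k : nat) (D : ('I_k -> R) -> Prop)
    (g : ('I_k -> R) -> R) : Prop :=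
  forall x y (t : R), D x -> D y -> 0 <= t <= 1 ->
    g (fun i => t * x i + (1 - t) * y i) <= t * g x + (1 - t) * g y.

Definition affine_map (k N : nat) (A : ('I_k -> R) -> ('I_N -> R)) : Prop :=
  exists (c : 'I_N -> 'I_k -> R) (b : 'I_N -> R),
    forall x i, A x i = b i + \sum_(j < k) c i j * x j.
End Defs.

From mathcomp Require Import all_boot all_order all_algebra.
From mathcomp Require Import reals.
From mathcomp Require Import boolp interval_inference sequences exp.
From mathcomp Require convex.
From mathcomp Require Import ring lra.
Set Implicit Arguments. Unset Strict Implicit. Unset Printing Implicit Defensive.
Import Order.TTheory GRing.Theory Num.Theory.
Local Open Scope ring_scope.

(* The function is log-convex, hence convex.  In the weighted geometric mean
   [G_t(x, y) = x^t y^(1-t)], Hölder's inequality reads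
   [G_t(x1, y1) + G_t(x2, y2) <= G_t(x1 + x2, y1 + y2)], so sums of
   log-convex functions are log-convex; thus each factor [n + c / w] is
   log-convex in [w > 0], being the sum of a constant and of [c / w], which is
   log-convex by AM-GM.  Products of log-convex functions are log-convex, and
   a final AM-GM [G_t(x, y) <= t x + (1 - t) y] gives convexity.  Affine
   substitutions commute with convex combinations, so they preserve it. *)

Definition geomean (R : realType) (t x y : R) : R :=
  expR (t * ln x + (1 - t) * ln y).

Section WeightedGeometricMean.
Variables (R : realType) (t : R).
Hypothesis t01 : 0 <= t <= 1.

Lemma geomean_gt0 (x y : R) : 0 < geomean t x y.
Proof. exact: expR_gt0. Qed.

Lemma geomeanxx (x : R) : 0 < x -> geomean t x x = x.
Proof. by move=> x0; rewrite /geomean -mulrDl subrKC mul1r lnK. Qed.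

Lemma geomeanM (x1 y1 x2 y2 : R) : 0 < x1 -> 0 < y1 -> 0 < x2 -> 0 < y2 ->
  geomean t (x1 * x2) (y1 * y2) = geomean t x1 y1 * geomean t x2 y2.
Proof.
move=> x10 y10 x20 y20; rewrite /geomean -expRD !lnM ?posrE //.
by congr expR; ring.
Qed.

Lemma geomeanV (x y : R) : 0 < x -> 0 < y ->
  geomean t x^-1 y^-1 = (geomean t x y)^-1.
Proof.
by move=> x0 y0; rewrite /geomean -expRN !lnV ?posrE //; congr expR; ring.
Qed.

Lemma geomean_prod (I : Type) (r : seq I) (x y : I -> R) :
  (forall i, 0 < x i) -> (forall i, 0 < y i) ->
  \prod_(i <- r) geomean t (x i) (y i) =
  geomean t (\prod_(i <- r) x i) (\prod_(i <- r) y i).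
Proof.
move=> x0 y0; elim: r => [|i r IHr]; first by rewrite !big_nil geomeanxx.
by rewrite !big_cons IHr geomeanM // prodr_gt0.
Qed.

Lemma geomean_le_arith {x y : R} : 0 < x -> 0 < y ->
  geomean t x y <= t * x + (1 - t) * y.
Proof.
move=> x0 y0; have /andP[t0 t1] := t01.
have := @convex_expR R (Itv01 t0 t1) (ln x) (ln y).
by rewrite !convex.convRE /= !lnK ?posrE.
Qed.

Lemma geomeanD_le {x1 y1 x2 y2 : R} :
  0 < x1 -> 0 < y1 -> 0 < x2 -> 0 < y2 ->
  geomean t x1 y1 + geomean t x2 y2 <= geomean t (x1 + x2) (y1 + y2).
Proof.
move=> x10 y10 x20 y20.
have sx0 : 0 < x1 + x2 by rewrite addr_gt0.
have sy0 : 0 < y1 + y2 by rewrite addr_gt0.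
have normalized_le x y : 0 < x -> 0 < y ->
    geomean t x y / geomean t (x1 + x2) (y1 + y2)
    <= t * (x / (x1 + x2)) + (1 - t) * (y / (y1 + y2)).
  move=> x0 y0; rewrite -geomeanV // -geomeanM ?invr_gt0 //.
  by apply: geomean_le_arith; rewrite divr_gt0.
have weights_sum1 : t * (x1 / (x1 + x2)) + (1 - t) * (y1 / (y1 + y2))
    + (t * (x2 / (x1 + x2)) + (1 - t) * (y2 / (y1 + y2))) = 1.
  by field; rewrite !gt_eqF.
rewrite -[leRHS]mul1r -ler_pdivrMr ?geomean_gt0 // mulrDl -weights_sum1.
exact: lerD (normalized_le _ _ x10 y10) (normalized_le _ _ x20 y20).
Qed.

Lemma inv_le_geomean (w1 w2 : R) : 0 < w1 -> 0 < w2 ->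
  (t * w1 + (1 - t) * w2)^-1 <= geomean t w1^-1 w2^-1.
Proof.
move=> w10 w20; rewrite geomeanV // lef_pV2 ?posrE ?geomean_gt0 //.
  exact: geomean_le_arith.
by case/andP: t01 => t0 t1; nra.
Qed.

Lemma addr_div_le_geomean (n c w1 w2 : R) :
  0 < n -> 0 < c -> 0 < w1 -> 0 < w2 ->
  n + c / (t * w1 + (1 - t) * w2) <= geomean t (n + c / w1) (n + c / w2).
Proof.
move=> n0 c0 w10 w20.
apply: le_trans _ (geomeanD_le n0 n0 (divr_gt0 c0 w10) (divr_gt0 c0 w20)).
rewrite geomeanxx // lerD2l geomeanM ?invr_gt0 // geomeanxx //.
by rewrite ler_pM2l // inv_le_geomean.
Qed.

Lemma prod_le_geomean (I : Type) (r : seq I) (p x y : I -> R) :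
  (forall i, 0 <= p i) -> (forall i, 0 < x i) -> (forall i, 0 < y i) ->
  (forall i, p i <= geomean t (x i) (y i)) ->
  \prod_(i <- r) p i <= t * \prod_(i <- r) x i + (1 - t) * \prod_(i <- r) y i.
Proof.
move=> p0 x0 y0 pG.
have prod_gt0 (f : I -> R) : (forall i, 0 < f i) -> 0 < \prod_(i <- r) f i.
  by move=> f0; apply: prodr_gt0.
apply: le_trans _ (geomean_le_arith (prod_gt0 _ x0) (prod_gt0 _ y0)).
by rewrite -geomean_prod // ler_prod // => i _; rewrite p0 pG.
Qed.

End WeightedGeometricMean.

Section Convexity.
Variable R : realType.

Lemma convex_comb_itv (lo hi x y t : R) : 0 <= t <= 1 ->
  lo < x < hi -> lo < y < hi -> lo < t * x + (1 - t) * y < hi.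
Proof.
move=> /andP[t0 t1] /andP[x_lo x_hi] /andP[y_lo y_hi].
have [->|t_gt0] := eqVneq t 0; first by rewrite mul0r add0r subr0 mul1r y_lo.
by apply/andP; split; nra.
Qed.

Lemma convex_onS (k : nat) (D E : ('I_k -> R) -> Prop) (g : ('I_k -> R) -> R) :
  (forall x, D x -> E x) -> convex_on E g -> convex_on D g.
Proof. by move=> DE gE x y t Dx Dy; apply: gE; apply: DE. Qed.

Lemma affine_map_convex_comb (k N : nat) (A : ('I_k -> R) -> 'I_N -> R)
    (x y : 'I_k -> R) (t : R) :
  affine_map A ->
  A (fun j => t * x j + (1 - t) * y j) = (fun i => t * A x i + (1 - t) * A y i).
Proof.
move=> [c [b Ab]]; apply: funext => i; rewrite !Ab !mulrDr addrACA -mulrDl.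
rewrite subrKC mul1r !mulr_sumr -big_split /=; congr (_ + _).
by apply: eq_bigr => j _; ring.
Qed.

Lemma convex_on_comp_affine (k N : nat) (D : ('I_k -> R) -> Prop)
    (E : ('I_N -> R) -> Prop) (g : ('I_N -> R) -> R)
    (A : ('I_k -> R) -> 'I_N -> R) :
  convex_on E g -> affine_map A -> (forall x, D x -> E (A x)) ->
  convex_on D (fun x => g (A x)).
Proof.
move=> gE affA DA x y t Dx Dy t01.
by rewrite affine_map_convex_comb //; apply: gE => //; apply: DA.
Qed.

End Convexity.

Section ConvexityOfFJ.
Variables (R : realType) (N J : nat) (a : 'I_N -> R).
Hypothesis a01 : forall i, 0 < a i < 1.

Definition in_unit_cube (z : 'I_N -> R) : Prop := forall i, 0 < z i < 1.

Definition fJ_factor (z : 'I_N -> R) (i : 'I_N) : R :=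
  if (i < J)%N then N%:R + a i / z i else N%:R + (1 - a i) / (1 - z i).

Lemma fJE (z : 'I_N -> R) : fJ J a z = \prod_(i < N) fJ_factor z i.
Proof. by []. Qed.

Lemma Nr_gt0 (i : 'I_N) : 0 < N%:R :> R.
Proof. by rewrite ltr0n (leq_ltn_trans (leq0n i) (ltn_ord i)). Qed.

Lemma fJ_factor_gt0 (z : 'I_N -> R) i : in_unit_cube z -> 0 < fJ_factor z i.
Proof.
move=> /(_ i) z01; have := a01 i.
rewrite /fJ_factor; case: ifP => _ a01i.
  by rewrite addr_gt0 ?(Nr_gt0 i) ?divr_gt0 //; lra.
by rewrite addr_gt0 ?(Nr_gt0 i) ?divr_gt0 //; lra.
Qed.

Lemma fJ_factor_le_geomean (x y : 'I_N -> R) (t : R) i :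
  0 <= t <= 1 -> in_unit_cube x -> in_unit_cube y ->
  fJ_factor (fun j => t * x j + (1 - t) * y j) i
  <= geomean t (fJ_factor x i) (fJ_factor y i).
Proof.
move=> t01 /(_ i) x01 /(_ i) y01; have := a01 i.
rewrite /fJ_factor; case: ifP => _ a01i.
  by apply: addr_div_le_geomean; rewrite ?(Nr_gt0 i) //; lra.
have -> : 1 - (t * x i + (1 - t) * y i) = t * (1 - x i) + (1 - t) * (1 - y i).
  by ring.
by apply: addr_div_le_geomean; rewrite ?(Nr_gt0 i) //; lra.
Qed.

Lemma convex_on_fJ : convex_on in_unit_cube (fJ J a).
Proof.
move=> x y t x01 y01 t01; rewrite !fJE.
have xy01 : in_unit_cube (fun j => t * x j + (1 - t) * y j).
  by move=> i; apply: convex_comb_itv.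
apply: prod_le_geomean => // i.
- exact/ltW/fJ_factor_gt0.
- exact: fJ_factor_gt0.
- exact: fJ_factor_gt0.
- exact: fJ_factor_le_geomean.
Qed.

End ConvexityOfFJ.

Theorem lemma2 (R : realType) (N J : nat) (m M : R) (a : 'I_N -> R)
    (hJ : (J <= N)%N) (hm : 0 < m) (hM : M < 1) (hmM : m <= M)
    (ha : forall i, m <= a i <= M) :
  convex_on (in_box m M) (fJ J a) /\
  (forall (k : nat) (D : ('I_k -> R) -> Prop) (A : ('I_k -> R) -> ('I_N -> R)),
      convex_set D -> affine_map A ->
      (forall x, D x -> in_box m M (A x)) ->
      convex_on D (fun x => fJ J a (A x))).
Proof.
have box_in_unit_cube (z : 'I_N -> R) : in_box m M z -> in_unit_cube z.
  by move=> mzM i; have /andP[mz zM] := mzM i; apply/andP; split; lra.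
have a01 := box_in_unit_cube a ha.
have fJ_convex : convex_on (in_box m M) (fJ J a).
  exact: convex_onS box_in_unit_cube (convex_on_fJ J a01).
split=> // k D A _ affA DA.
exact: convex_on_comp_affine fJ_convex affA DA.
Qed.
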